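(* Let $(\mathcal B,T,\langle\!\langle-\rangle\!\rangle,\theta)$ be a bicategory with shadow. Let $\mathcal D$ be a diagram in the shadow category $\mathrm{Sh}(U\mathcal B)$ of the free shadowed bicategory on the underlying graph of $\mathcal B$, such that any two parallel composites in $\mathcal D$ have the same underlying cyclic permutation. Then the image of $\mathcal D$ in $T$ under the counit commutes. In particular, if the edges $X_1,\dots,X_n$ involved form an aperiodic list, every formal diagram in $T$ on them commutes.
   Context: A shadow on a bicategory $\mathcal B$ consists of a category $T$, functors $\langle\!\langle-\rangle\!\rangle:\mathcal B(A,A)\to T$ for each 0-cell $A$, and natural isomorphisms $\theta:\langle\!\langle M\odot N\rangle\!\rangle\cong\langle\!\langle N\odot M\rangle\!\rangle$ for $M\in\mathcal B(A,B)$, $N\in\mathcal B(B,A)$, such that $\theta\circ\theta=\mathrm{id}$, $\ell\circ\theta=r$ as maps $\langle\!\langle X\odot I\rangle\!\rangle\to\langle\!\langle X\rangle\!\rangle$, and $\theta\circ\alpha\circ\theta=\alpha\circ\theta\circ\alpha$ as maps $\langle\!\langle (X\odot Y)\odot Z\rangle\!\rangle\to\langle\!\langle Y\odot(Z\odot X)\rangle\!\rangle$ (i.e. $\langle\!\langle (X\odot Y)\odot Z\rangle\!\rangle\xrightarrow{\theta}\langle\!\langle Z\odot(X\odot Y)\rangle\!\rangle\xrightarrow{\alpha}\langle\!\langle (Z\odot X)\odot Y\rangle\!\rangle\xrightarrow{\theta}\langle\!\langle Y\odot(Z\odot X)\rangle\!\rangle$ equals $\langle\!\langle (X\odot Y)\odot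 Z\rangle\!\rangle\xrightarrow{\alpha}\langle\!\langle X\odot(Y\odot Z)\rangle\!\rangle\xrightarrow{\theta}\langle\!\langle (Y\odot Z)\odot X\rangle\!\rangle\xrightarrow{\alpha}\langle\!\langle Y\odot(Z\odot X)\rangle\!\rangle$). Strict maps of shadowed bicategories are strict functors with a functor of shadow categories strictly commuting with all structure. The forgetful functor to directed graphs takes the underlying graph $U\mathcal B$ (0-cells and 1-cells). Its left adjoint sends a graph $G$ to $(\mathcal F(G),\mathrm{Sh}(G))$, where $\mathcal F(G)$ is the free bicategory on $G$ (1-cells: parenthesized composable words in edges and formal units; 2-cells: generated by whiskered associators/unitors modulo the bicategory axioms), and $\mathrm{Sh}(G)$ has objects $\langle\!\langle w\rangle\!\rangle$ for $w$ an endomorphism 1-cell of $\mathcal F(G)$, morphisms generated by whiskered associators/unitors inside $w$ and rotators $\theta:\langle\!\langle A\odot B\rangle\!\rangle\cong\langle\!\langle B\odot A\rangle\!\rangle$ applied to the outermost product, modulo the bicategory relations, the shadow axioms and naturality of $\theta$. A morphism of $\mathrm{Sh}(G)$ induces a bijection between the edge occurrences (letters) of source and target, which is a cyclic permutation ($\theta$ rotates; other generators preserve order); this is its underlying cyclic permutation. A formal diagram in $T$ is the image of a diagram in $\mathrm{Sh}(U\mathcal B)$ under the counit. A list $X_1,\dots,X_n$ of edges is aperiodic if no nontrivial cyclic rotation of the list returns the same list. *)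

From Stdlib Require List.
From mathcomp Require Import all_boot.

Set Implicit Arguments.
Unset Strict Implicit.
Unset Printing Implicit Defensive.

(* Bicategories.  1-cell composition is written in diagrammatic order:  *)
(* comp1 M N = M ⊙ N for M : A -> B, N : B -> C.  Vertical composition  *)
(* vcomp a b is "first a, then b".                                       *)
Record Bicat := {
  ob : Type;
  hom : ob -> ob -> Type;
  cell : forall A B, hom A B -> hom A B -> Type;
  id2 : forall A B (f : hom A B), cell f f;
  vcomp : forall A B (f g h : hom A B), cell f g -> cell g h -> cell f h;
  comp1 : forall A B C, hom A B -> hom B C -> hom A C;
  unit1 : forall A, hom A A;
  hcomp : forall A B C (f f' : hom A B) (g g' : hom B C),
      cell f f' -> cell g g' -> cell (comp1 f g) (comp1 f' g');
  assoc : forall A B C D (f : hom A B) (g : hom B C) (h : hom C D),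
      cell (comp1 (comp1 f g) h) (comp1 f (comp1 g h));
  assoc_inv : forall A B C D (f : hom A B) (g : hom B C) (h : hom C D),
      cell (comp1 f (comp1 g h)) (comp1 (comp1 f g) h);
  lunit : forall A B (f : hom A B), cell (comp1 (unit1 A) f) f;
  lunit_inv : forall A B (f : hom A B), cell f (comp1 (unit1 A) f);
  runit : forall A B (f : hom A B), cell (comp1 f (unit1 B)) f;
  runit_inv : forall A B (f : hom A B), cell f (comp1 f (unit1 B));
  vcomp_id_l : forall A B (f g : hom A B) (a : cell f g), vcomp (id2 f) a = a;
  vcomp_id_r : forall A B (f g : hom A B) (a : cell f g), vcomp a (id2 g) = a;
  vcomp_assoc : forall A B (f g h k : hom A B) (a : cell f g) (b : cell g h)
      (c : cell h k), vcomp a (vcomp b c) = vcomp (vcomp a b) c;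
  hcomp_id : forall A B C (f : hom A B) (g : hom B C),
      hcomp (id2 f) (id2 g) = id2 (comp1 f g);
  hcomp_vcomp : forall A B C (f f' f'' : hom A B) (g g' g'' : hom B C)
      (a : cell f f') (a' : cell f' f'') (b : cell g g') (b' : cell g' g''),
      hcomp (vcomp a a') (vcomp b b') = vcomp (hcomp a b) (hcomp a' b');
  assoc_nat : forall A B C D (f f' : hom A B) (g g' : hom B C) (h h' : hom C D)
      (a : cell f f') (b : cell g g') (c : cell h h'),
      vcomp (hcomp (hcomp a b) c) (assoc f' g' h')
      = vcomp (assoc f g h) (hcomp a (hcomp b c));
  lunit_nat : forall A B (f f' : hom A B) (a : cell f f'),
      vcomp (hcomp (id2 (unit1 A)) a) (lunit f') = vcomp (lunit f) a;
  runit_nat : forall A B (f f' : hom A B) (a : cell f f'),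
      vcomp (hcomp a (id2 (unit1 B))) (runit f') = vcomp (runit f) a;
  assoc_iso1 : forall A B C D (f : hom A B) (g : hom B C) (h : hom C D),
      vcomp (assoc f g h) (assoc_inv f g h) = id2 _;
  assoc_iso2 : forall A B C D (f : hom A B) (g : hom B C) (h : hom C D),
      vcomp (assoc_inv f g h) (assoc f g h) = id2 _;
  lunit_iso1 : forall A B (f : hom A B), vcomp (lunit f) (lunit_inv f) = id2 _;
  lunit_iso2 : forall A B (f : hom A B), vcomp (lunit_inv f) (lunit f) = id2 _;
  runit_iso1 : forall A B (f : hom A B), vcomp (runit f) (runit_inv f) = id2 _;
  runit_iso2 : forall A B (f : hom A B), vcomp (runit_inv f) (runit f) = id2 _;
  pentagon : forall A B C D E (f : hom A B) (g : hom B C) (h : hom C D)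
      (k : hom D E),
      vcomp (assoc (comp1 f g) h k) (assoc f g (comp1 h k))
      = vcomp (hcomp (assoc f g h) (id2 k))
          (vcomp (assoc f (comp1 g h) k) (hcomp (id2 f) (assoc g h k)));
  triangle : forall A B C (f : hom A B) (g : hom B C),
      vcomp (assoc f (unit1 B) g) (hcomp (id2 f) (lunit g))
      = hcomp (runit f) (id2 g)
}.

Arguments id2 {b0 A B} f.
Arguments vcomp {b0 A B f g h} _ _.
Arguments comp1 {b0 A B C} _ _.
Arguments unit1 {b0} A.
Arguments hcomp {b0 A B C f f' g g'} _ _.
Arguments assoc {b0 A B C D} f g h.
Arguments assoc_inv {b0 A B C D} f g h.
Arguments lunit {b0 A B} f.
Arguments lunit_inv {b0 A B} f.
Arguments runit {b0 A B} f.
Arguments runit_inv {b0 A B} f.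
Arguments cell {b0 A B} _ _.
Arguments hom {b0} _ _.

(* Shadows on a bicategory.  tcomp is diagrammatic ("first, then").    *)
Record Shadow (B : Bicat) := {
  tob : Type;
  tmor : tob -> tob -> Type;
  tid : forall x, tmor x x;
  tcomp : forall x y z, tmor x y -> tmor y z -> tmor x z;
  tcomp_id_l : forall x y (f : tmor x y), tcomp (tid x) f = f;
  tcomp_id_r : forall x y (f : tmor x y), tcomp f (tid y) = f;
  tcomp_assoc : forall x y z w (f : tmor x y) (g : tmor y z) (h : tmor z w),
      tcomp f (tcomp g h) = tcomp (tcomp f g) h;
  sh : forall A : ob B, @hom B A A -> tob;
  shmap : forall A (f g : @hom B A A), cell f g -> tmor (sh f) (sh g);
  shmap_id : forall A (f : @hom B A A), shmap (id2 f) = tid (sh f);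
  shmap_comp : forall A (f g h : @hom B A A) (a : cell f g) (b : cell g h),
      shmap (vcomp a b) = tcomp (shmap a) (shmap b);
  theta : forall (A C : ob B) (M : hom A C) (N : hom C A),
      tmor (sh (comp1 M N)) (sh (comp1 N M));
  theta_nat : forall (A C : ob B) (M M' : hom A C) (N N' : hom C A)
      (a : cell M M') (b : cell N N'),
      tcomp (shmap (hcomp a b)) (theta M' N') = tcomp (theta M N) (shmap (hcomp b a));
  theta_invol : forall (A C : ob B) (M : hom A C) (N : hom C A),
      tcomp (theta M N) (theta N M) = tid _;
  theta_unit : forall (A : ob B) (X : hom A A),
      tcomp (theta X (unit1 A)) (shmap (lunit X)) = shmap (runit X);
  theta_hex : forall (A C E : ob B) (X : hom A C) (Y : hom C E) (Z : hom E A),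
      tcomp (theta (comp1 X Y) Z)
        (tcomp (shmap (assoc_inv Z X Y)) (theta (comp1 Z X) Y))
      = tcomp (shmap (assoc X Y Z))
          (tcomp (theta X (comp1 Y Z)) (shmap (assoc Y Z X)))
}.

Arguments tmor {B} s _ _.
Arguments tcomp {B s x y z} _ _.
Arguments tid {B s} x.
Arguments sh {B s A} _.
Arguments shmap {B s A f g} _.
Arguments theta {B s A C} M N.

(* The free shadowed bicategory on the underlying graph U B:            *)
(* formal 1-cells (parenthesized words of edges and formal units),      *)
(* formal 2-cells, formal shadow morphisms (as generating terms).       *)
Inductive Word (B : Bicat) : ob B -> ob B -> Type :=
| WEdge : forall A C, @hom B A C -> @Word B A C
| WUnit : forall A, @Word B A A
| WComp : forall A C D, @Word B A C -> @Word B C D -> @Word B A D.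

Arguments WEdge {B A C} _.
Arguments WUnit {B} A.
Arguments WComp {B A C D} _ _.

Inductive FCell (B : Bicat) : forall A C : ob B, @Word B A C -> @Word B A C -> Type :=
| FId : forall A C (w : @Word B A C), FCell w w
| FVcomp : forall A C (u v w : @Word B A C), FCell u v -> FCell v w -> FCell u w
| FWhiskL : forall A C D (x : @Word B A C) (u v : @Word B C D),
    FCell u v -> FCell (WComp x u) (WComp x v)
| FWhiskR : forall A C D (u v : @Word B A C) (x : @Word B C D),
    FCell u v -> FCell (WComp u x) (WComp v x)
| FAssoc : forall A C D E (u : @Word B A C) (v : @Word B C D) (w : @Word B D E),
    FCell (WComp (WComp u v) w) (WComp u (WComp v w))
| FAssocInv : forall A C D E (u : @Word B A C) (v : @Word B C D) (w : @Word B D E),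
    FCell (WComp u (WComp v w)) (WComp (WComp u v) w)
| FLunit : forall A C (u : @Word B A C), FCell (WComp (WUnit A) u) u
| FLunitInv : forall A C (u : @Word B A C), FCell u (WComp (WUnit A) u)
| FRunit : forall A C (u : @Word B A C), FCell (WComp u (WUnit C)) u
| FRunitInv : forall A C (u : @Word B A C), FCell u (WComp u (WUnit C)).

Inductive FSh (B : Bicat) : forall A : ob B, @Word B A A -> forall A' : ob B, @Word B A' A' -> Type :=
| FShId : forall A (w : @Word B A A), FSh w w
| FShComp : forall A1 A2 A3 (w1 : @Word B A1 A1) (w2 : @Word B A2 A2) (w3 : @Word B A3 A3),
    FSh w1 w2 -> FSh w2 w3 -> FSh w1 w3
| FShCell : forall A (w w' : @Word B A A), FCell w w' -> FSh w w'
| FShTheta : forall A C (u : @Word B A C) (v : @Word B C A), FSh (WComp u v) (WComp v u).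

(* Edges of the underlying graph U B: 1-cells of B. *)
Definition Edge (B : Bicat) := {X : ob B & {Y : ob B & @hom B X Y}}.

Fixpoint letters (B : Bicat) A C (w : @Word B A C) : seq (Edge B) :=
  match w with
  | @WEdge _ X Y M => [:: existT _ X (existT _ Y M)]
  | WUnit _ => [::]
  | WComp _ _ _ u v => letters u ++ letters v
  end.

(* Underlying cyclic permutation: the morphism sends the letter list l of
   its source to rot (shift f) l, the letter list of its target; the
   permutation is determined by shift f modulo size l. *)
Fixpoint shift (B : Bicat) A (w : @Word B A A) A' (w' : @Word B A' A')
  (f : FSh w w') : nat :=
  match f with
  | FShId _ _ => 0
  | FShComp _ _ _ _ _ _ g h => shift g + shift h
  | FShCell _ _ _ _ => 0
  | FShTheta _ _ u _ => size (letters u)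
  end.

(* The counit: interpretation of formal cells in B and in T. *)
Fixpoint evalW (B : Bicat) A C (w : @Word B A C) : @hom B A C :=
  match w in @Word _ A0 C0 return @hom B A0 C0 with
  | WEdge _ _ M => M
  | WUnit A0 => unit1 A0
  | WComp _ _ _ u v => comp1 (evalW u) (evalW v)
  end.

Fixpoint evalC (B : Bicat) A C (u v : @Word B A C) (c : FCell u v)
  : cell (evalW u) (evalW v) :=
  match c in @FCell _ A0 C0 u0 v0 return cell (evalW u0) (evalW v0) with
  | FId _ _ w => id2 (evalW w)
  | FVcomp _ _ _ _ _ a b => vcomp (evalC a) (evalC b)
  | FWhiskL _ _ _ x _ _ a => hcomp (id2 (evalW x)) (evalC a)
  | FWhiskR _ _ _ _ _ x a => hcomp (evalC a) (id2 (evalW x))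
  | FAssoc _ _ _ _ u0 v0 w0 => assoc (evalW u0) (evalW v0) (evalW w0)
  | FAssocInv _ _ _ _ u0 v0 w0 => assoc_inv (evalW u0) (evalW v0) (evalW w0)
  | FLunit _ _ u0 => lunit (evalW u0)
  | FLunitInv _ _ u0 => lunit_inv (evalW u0)
  | FRunit _ _ u0 => runit (evalW u0)
  | FRunitInv _ _ u0 => runit_inv (evalW u0)
  end.

Fixpoint evalSh (B : Bicat) (S : Shadow B) A (w : @Word B A A) A' (w' : @Word B A' A')
  (f : FSh w w') : tmor S (sh (evalW w)) (sh (evalW w')) :=
  match f in @FSh _ A0 w0 A0' w0'
    return tmor S (sh (evalW w0)) (sh (evalW w0')) with
  | FShId _ w0 => tid _
  | FShComp _ _ _ _ _ _ g h => tcomp (evalSh S g) (evalSh S h)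
  | FShCell _ _ _ c => shmap (evalC c)
  | FShTheta _ _ u v => theta (evalW u) (evalW v)
  end.

Definition ShObj (B : Bicat) := {A : ob B & @Word B A A}.
Definition FShO (B : Bicat) (x y : ShObj B) := FSh (projT2 x) (projT2 y).
Definition Arrow (B : Bicat) := {x : ShObj B & {y : ShObj B & FShO x y}}.
Definition arr_src (B : Bicat) (a : Arrow B) : ShObj B := projT1 a.
Definition arr_tgt (B : Bicat) (a : Arrow B) : ShObj B := projT1 (projT2 a).

(* A diagram is given by its (finite) list of arrows; composites are the
   composites of composable paths of arrows of the diagram (including
   the empty path = identity). *)
Definition Diagram (B : Bicat) := seq (Arrow B).

Inductive Composite (B : Bicat) (D : Diagram B) : forall x y : ShObj B, FShO x y -> Prop :=
| CNil : forall x, @Composite B D x x (FShId (projT2 x))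
| CCons : forall x y z (f : FShO x y) (g : FShO y z),
    List.In (existT _ x (existT _ y f)) D ->
    @Composite B D y z g -> @Composite B D x z (FShComp f g).

Arguments Composite {B} D x y _.

Definition same_cyc_perm (B : Bicat) (D : Diagram B) : Prop :=
  forall (x y : ShObj B) (f g : FShO x y),
    Composite D x y f -> Composite D x y g ->
    shift f = shift g %[mod size (letters (projT2 x))].

Definition image_commutes (B : Bicat) (S : Shadow B) (D : Diagram B) : Prop :=
  forall (x y : ShObj B) (f g : FShO x y),
    Composite D x y f -> Composite D x y g -> evalSh S f = evalSh S g.

Definition aperiodic (T : Type) (l : seq T) : Prop :=
  forall k, 0 < k < size l -> rot k l <> l.

(* D is a formal diagram "on" the edges Xs: the letters of every object
   of D form a cyclic rotation of Xs. *)
Definition diagram_on (B : Bicat) (Xs : seq (Edge B)) (D : Diagram B) : Prop :=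
  forall a, List.In a D ->
    (exists k, letters (projT2 (arr_src a)) = rot k Xs) /\
    (exists k, letters (projT2 (arr_tgt a)) = rot k Xs).

(* Part 1 is coherence for bicategories: every formal word is connected to
   a normal word (the list of its edges, bracketed to the right and closed
   by a unit) by a canonical formal 2-cell [normalize], every formal
   2-cell commutes with these normalizations ([normalize_natural]), and
   hence any two parallel formal 2-cells have the same interpretation
   ([fcell_coherence]).

   On shadows of normal words we define the
   canonical rotation by [k] letters, built from [theta] and normalizing
   2-cells.  Every formal shadow morphism [f] is interpreted as the
   rotation by [shift f], conjugated by the normalizations of its source
   and target ([evalSh_conj_rotation]); the rotation by the length of the
   word is the identity ([full_rotation]), so rotations only depend on
   their amount modulo the length ([rotation_mod]).

   Part 3 shows that a morphism rotates the letter list of its source by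
   [shift f]; when the letters form a rotation of an aperiodic list, the
   shift modulo the length is determined by source and target, so the
   hypothesis of Part 2 holds automatically. *)
From mathcomp Require Import all_boot.
From Stdlib Require Import ProofIrrelevance.

Set Implicit Arguments.
Unset Strict Implicit.
Unset Printing Implicit Defensive.

Local Notation "a ** b" := (vcomp a b) (at level 40, left associativity).
Local Notation "a <o> b" := (hcomp a b) (at level 35).
Local Notation "a >>> b" := (tcomp a b) (at level 40, left associativity).

Section Coherence.
Variable B : Bicat.

Inductive NWord : ob B -> ob B -> Type :=
| NNil : forall A, NWord A A
| NCons : forall A C D, @hom B A C -> NWord C D -> NWord A D.
Arguments NCons {A C D} _ _.

Fixpoint embed A C (n : NWord A C) : Word A C :=
  match n in NWord A0 C0 return Word A0 C0 with
  | NNil A0 => WUnit A0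
  | NCons _ _ _ M t => WComp (WEdge M) (embed t)
  end.

Fixpoint napp A C (w : Word A C) D (t : NWord C D) {struct w} : NWord A D :=
  match w in @Word _ A0 C0 return NWord C0 D -> NWord A0 D with
  | WEdge _ _ M => fun t => NCons M t
  | WUnit _ => fun t => t
  | WComp _ _ _ u v => fun t => napp u (napp v t)
  end t.

Fixpoint normalize A C (u : Word A C) D (t : NWord C D) {struct u}
  : FCell (WComp u (embed t)) (embed (napp u t)) :=
  match u as u0 in @Word _ A0 C0 return forall t : NWord C0 D,
     FCell (WComp u0 (embed t)) (embed (napp u0 t)) with
  | WEdge _ _ M => fun t => FId _
  | WUnit A0 => fun t => FLunit (embed t)
  | WComp _ _ _ u1 v1 => fun t => FVcomp (FAssoc u1 v1 (embed t))
       (FVcomp (FWhiskL u1 (normalize v1 t)) (normalize u1 (napp v1 t)))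
  end t.

Fixpoint fcell_inv A C (u v : Word A C) (c : FCell u v) : FCell v u :=
  match c in @FCell _ A0 C0 p0 q0 return FCell q0 p0 with
  | FId _ _ w => FId w
  | FVcomp _ _ _ _ _ a b => FVcomp (fcell_inv b) (fcell_inv a)
  | FWhiskL _ _ _ x _ _ a => FWhiskL x (fcell_inv a)
  | FWhiskR _ _ _ _ _ x a => FWhiskR x (fcell_inv a)
  | FAssoc _ _ _ _ u0 v0 w0 => FAssocInv u0 v0 w0
  | FAssocInv _ _ _ _ u0 v0 w0 => FAssoc u0 v0 w0
  | FLunit _ _ u0 => FLunitInv u0
  | FLunitInv _ _ u0 => FLunit u0
  | FRunit _ _ u0 => FRunitInv u0
  | FRunitInv _ _ u0 => @FRunit B _ _ u0
  end.

Lemma lwhisker_vcomp A C D (x : @hom B A C) (f g h : @hom B C D)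
    (a : cell f g) (b : cell g h) :
  (id2 x <o> a) ** (id2 x <o> b) = id2 x <o> (a ** b).
Proof. by rewrite -hcomp_vcomp vcomp_id_l. Qed.

Lemma rwhisker_vcomp A C D (x : @hom B C D) (f g h : @hom B A C)
    (a : cell f g) (b : cell g h) :
  (a <o> id2 x) ** (b <o> id2 x) = (a ** b) <o> id2 x.
Proof. by rewrite -hcomp_vcomp vcomp_id_l. Qed.

Lemma hcomp_split A C D (f f' : @hom B A C) (g g' : @hom B C D)
    (a : cell f f') (b : cell g g') :
  a <o> b = (a <o> id2 g) ** (id2 f' <o> b).
Proof. by rewrite -hcomp_vcomp vcomp_id_l vcomp_id_r. Qed.

Lemma whisker_exchange A C D (f f' : @hom B A C) (g g' : @hom B C D)
    (a : cell f f') (b : cell g g') :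
  (a <o> id2 g) ** (id2 f' <o> b) = (id2 f <o> b) ** (a <o> id2 g').
Proof. by rewrite -!hcomp_split -hcomp_vcomp vcomp_id_l vcomp_id_r. Qed.

Lemma evalC_fcell_inv A C (u v : Word A C) (c : FCell u v) :
  evalC c ** evalC (fcell_inv c) = id2 _ /\ evalC (fcell_inv c) ** evalC c = id2 _.
Proof.
elim: c => /=.
- by move=> *; rewrite vcomp_id_l.
- move=> A0 C0 u0 v0 w0 a [Ha1 Ha2] b [Hb1 Hb2]; split.
  + by rewrite -vcomp_assoc (vcomp_assoc (evalC b)) Hb1 vcomp_id_l Ha1.
  + by rewrite -vcomp_assoc (vcomp_assoc (evalC (fcell_inv a))) Ha2 vcomp_id_l Hb2.
- by move=> A0 C0 D0 x u0 v0 a [H1 H2]; rewrite !lwhisker_vcomp H1 H2 !hcomp_id.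
- by move=> A0 C0 D0 u0 v0 x a [H1 H2]; rewrite !rwhisker_vcomp H1 H2 !hcomp_id.
- by move=> *; split; [exact: assoc_iso1|exact: assoc_iso2].
- by move=> *; split; [exact: assoc_iso2|exact: assoc_iso1].
- by move=> *; split; [exact: lunit_iso1|exact: lunit_iso2].
- by move=> *; split; [exact: lunit_iso2|exact: lunit_iso1].
- by move=> *; split; [exact: runit_iso1|exact: runit_iso2].
- by move=> *; split; [exact: runit_iso2|exact: runit_iso1].
Qed.

Lemma vcomp_cancel_l A C (f g h : @hom B A C) (a : cell f g) (a' : cell g f)
    (x y : cell g h) :
  a' ** a = id2 _ -> a ** x = a ** y -> x = y.
Proof.
by move=> Ha E; rewrite -(vcomp_id_l x) -(vcomp_id_l y) -Ha -!vcomp_assoc E.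
Qed.

Lemma vcomp_cancel_r A C (f g h : @hom B A C) (a : cell g h) (a' : cell h g)
    (x y : cell f g) :
  a ** a' = id2 _ -> x ** a = y ** a -> x = y.
Proof.
by move=> Ha E; rewrite -(vcomp_id_r x) -(vcomp_id_r y) -Ha !vcomp_assoc E.
Qed.

(* Whiskering by a unit on the left is faithful (it is conjugate to the
   identity through the left unitor). *)
Lemma lwhisker_unit_inj A C (f g : @hom B A C) (a b : cell f g) :
  id2 (unit1 A) <o> a = id2 (unit1 A) <o> b -> a = b.
Proof.
move=> E; apply: (vcomp_cancel_l (a' := lunit_inv f)); first exact: lunit_iso2.
by rewrite -!lunit_nat E.
Qed.

(* Kelly's lemma: the left unitor of a composite is determined by the
   associator, derived from the pentagon and the triangle. *)
Lemma assoc_lunit A C D (f : @hom B A C) (g : @hom B C D) :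
  assoc (unit1 A) f g ** lunit (comp1 f g) = lunit f <o> id2 g.
Proof.
set I := unit1 A.
apply: lwhisker_unit_inj.
have P := pentagon I I f g.
have T1 := triangle I (comp1 f g).
have T2 := triangle I f.
have N1 := assoc_nat (runit I) (id2 f) (id2 g).
have N2 := assoc_nat (id2 I) (lunit f) (id2 g).
rewrite hcomp_id in N1.
apply: (vcomp_cancel_l (a := (assoc I I f <o> id2 g) ** assoc I (comp1 I f) g)
          (a' := assoc_inv I (comp1 I f) g ** (assoc_inv I I f <o> id2 g))).
  rewrite -vcomp_assoc (vcomp_assoc (_ <o> _)) rwhisker_vcomp assoc_iso2.
  by rewrite hcomp_id vcomp_id_l assoc_iso2.
rewrite -lwhisker_vcomp !vcomp_assoc -(vcomp_assoc _ _ (id2 I <o> assoc I f g)).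
rewrite -P -(vcomp_assoc (assoc (comp1 _ _) f g)) T1 -N1 -T2 -rwhisker_vcomp.
by rewrite -!vcomp_assoc N2 !vcomp_assoc.
Qed.

Definition ncast A C (n m : NWord A C) (e : n = m)
  : cell (evalW (embed n)) (evalW (embed m)) :=
  match e with erefl => id2 _ end.

Lemma ncast_id A C (n : NWord A C) (e : n = n) : ncast e = id2 _.
Proof. by rewrite (proof_irrelevance _ e erefl). Qed.

Lemma ncast_comp A C (n m k : NWord A C) (e1 : n = m) (e2 : m = k) (e3 : n = k) :
  ncast e1 ** ncast e2 = ncast e3.
Proof. by subst; rewrite !ncast_id vcomp_id_l. Qed.

Lemma ncast_normalize A C D (x : Word A C) (t1 t2 : NWord C D) (e : t1 = t2)
    (e' : napp x t1 = napp x t2) :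
  (id2 (evalW x) <o> ncast e) ** evalC (normalize x t2)
  = evalC (normalize x t1) ** ncast e'.
Proof. by subst; rewrite !ncast_id hcomp_id vcomp_id_l vcomp_id_r. Qed.

Lemma napp_fcell A C (u v : Word A C) (c : FCell u v) D (t : NWord C D) :
  napp u t = napp v t.
Proof. by elim: c D t => //=; congruence. Qed.

Lemma normalize_assoc A C D E (u : Word A C) (v : Word C D) (w : Word D E)
    F (t : NWord E F) :
  (assoc (evalW u) (evalW v) (evalW w) <o> id2 (evalW (embed t)))
    ** evalC (normalize (WComp u (WComp v w)) t)
  = evalC (normalize (WComp (WComp u v) w) t).
Proof.
have P := pentagon (evalW u) (evalW v) (evalW w) (evalW (embed t)).
rewrite !vcomp_assoc in P.
rewrite /= -!lwhisker_vcomp !vcomp_assoc -P -[id2 (comp1 (evalW u) (evalW v))]hcomp_id.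
by rewrite -(vcomp_assoc (assoc (comp1 _ _) _ _) ((_ <o> _) <o> _)) assoc_nat !vcomp_assoc.
Qed.

Lemma normalize_lunit A C (u : Word A C) D (t : NWord C D) :
  (lunit (evalW u) <o> id2 (evalW (embed t))) ** evalC (normalize u t)
  = evalC (normalize (WComp (WUnit A) u) t).
Proof. by rewrite /= lunit_nat vcomp_assoc assoc_lunit. Qed.

Lemma normalize_runit A C (u : Word A C) D (t : NWord C D) :
  (runit (evalW u) <o> id2 (evalW (embed t))) ** evalC (normalize u t)
  = evalC (normalize (WComp u (WUnit C)) t).
Proof. by rewrite /= vcomp_assoc triangle. Qed.

Lemma normalize_natural A C (u v : Word A C) (c : FCell u v) D (t : NWord C D)
    (e : napp u t = napp v t) :
  (evalC c <o> id2 (evalW (embed t))) ** evalC (normalize v t)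
  = evalC (normalize u t) ** ncast e.
Proof.
elim: c D t e.
- by move=> A0 C0 w D t e; rewrite hcomp_id vcomp_id_l ncast_id vcomp_id_r.
- move=> A0 C0 u0 v0 w0 a IHa b IHb D t e /=.
  rewrite -rwhisker_vcomp -vcomp_assoc (IHb D t (napp_fcell b t)).
  by rewrite vcomp_assoc (IHa D t (napp_fcell a t)) -vcomp_assoc ncast_comp.
- move=> A0 C0 D0 x u0 v0 a IH D t e /=.
  rewrite vcomp_assoc assoc_nat -(vcomp_assoc (assoc _ _ _)).
  rewrite (vcomp_assoc (_ <o> (_ <o> _))) lwhisker_vcomp (IH D t (napp_fcell a t)).
  by rewrite -lwhisker_vcomp -!vcomp_assoc ncast_normalize.
- move=> A0 C0 D0 u0 v0 x a IH D t e /=.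
  rewrite vcomp_assoc assoc_nat hcomp_id -(vcomp_assoc (assoc _ _ _)).
  by rewrite (vcomp_assoc (_ <o> _)) whisker_exchange -!vcomp_assoc (IH _ _ e) !vcomp_assoc.
- by move=> *; rewrite normalize_assoc ncast_id vcomp_id_r.
- move=> A0 C0 D0 E0 u0 v0 w0 D t e.
  rewrite -normalize_assoc vcomp_assoc rwhisker_vcomp assoc_iso2.
  by rewrite hcomp_id vcomp_id_l ncast_id vcomp_id_r.
- by move=> *; rewrite normalize_lunit ncast_id vcomp_id_r.
- move=> A0 C0 u0 D t e.
  rewrite -normalize_lunit vcomp_assoc rwhisker_vcomp lunit_iso2.
  by rewrite hcomp_id vcomp_id_l ncast_id vcomp_id_r.
- by move=> *; rewrite normalize_runit ncast_id vcomp_id_r.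
- move=> A0 C0 u0 D t e.
  rewrite -normalize_runit vcomp_assoc rwhisker_vcomp runit_iso2.
  by rewrite hcomp_id vcomp_id_l ncast_id vcomp_id_r.
Qed.

Theorem fcell_coherence (A C : ob B) (u v : Word A C) (c1 c2 : FCell u v) :
  evalC c1 = evalC c2.
Proof.
have E1 := normalize_natural c1 (napp_fcell c1 (NNil C)).
have E2 := normalize_natural c2 (napp_fcell c1 (NNil C)).
rewrite -E2 in E1.
have [Hinv _] := evalC_fcell_inv (normalize v (NNil C)).
have E := vcomp_cancel_r Hinv E1.
apply: (vcomp_cancel_l (a := runit (evalW u)) (a' := runit_inv (evalW u))).
  exact: runit_iso2.
by rewrite -!runit_nat E.
Qed.
Lemma letters_napp A C (u : Word A C) D (s : NWord C D) :
  letters (embed (napp u s)) = letters u ++ letters (embed s).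
Proof. by elim: u D s => //= A0 C0 D0 u IHu v IHv D s; rewrite IHu IHv catA. Qed.

Lemma napp_embed A C (u : Word A C) D (s : NWord C D) E (t : NWord D E) :
  napp (embed (napp u s)) t = napp u (napp (embed s) t).
Proof. by elim: u D s E t => //= A0 C0 D0 u IHu v IHv D s E t; rewrite IHu IHv. Qed.

Lemma napp_embed_nil A C (n : NWord A C) : napp (embed n) (NNil C) = n.
Proof. by elim: n => //= A0 C0 D0 M t ->. Qed.

Section Shadows.
Variable S : Shadow B.

Definition NShObj := {A : ob B & NWord A A}.
Definition evalN (y : NShObj) : tob S := sh (evalW (embed (projT2 y))).
Definition ntransport (y z : NShObj) (e : y = z) : tmor S (evalN y) (evalN z) :=
  match e with erefl => tid _ end.

Lemma ntransport_id (y : NShObj) (e : y = y) : ntransport e = tid _.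
Proof. by rewrite (proof_irrelevance _ e erefl). Qed.

Lemma ntransport_comp (y z w : NShObj) (e1 : y = z) (e2 : z = w) (e3 : y = w) :
  ntransport e1 >>> ntransport e2 = ntransport e3.
Proof. by subst; rewrite !ntransport_id tcomp_id_l. Qed.

Definition rotate_cons A C (X : @hom B A C) (t : NWord C A) :
  {y : NShObj & FSh (WComp (WEdge X) (embed t)) (embed (projT2 y))} :=
  existT _ (existT _ C (napp (embed t) (NCons X (NNil C))))
    (FShComp (FShTheta (WEdge X) (embed t))
      (FShCell (FVcomp (FWhiskL (embed t) (FRunitInv (WEdge X)))
                       (normalize (embed t) (NCons X (NNil C)))))).

Definition ncast_index A D (e : D = A) (n : NWord A D) : NWord A A :=
  eq_rect D (NWord A) n A e.

(* One-letter rotation of a shadow of a normal word (the identity on the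
   empty word); the index equation makes the case analysis possible. *)
Definition rotate_step_gen A D (n : NWord A D) : forall e : D = A,
  {y : NShObj & FSh (embed (ncast_index e n)) (embed (projT2 y))}.
Proof.
case: n => [A0|A0 C0 D0 X t] e.
- exact (existT _ (existT _ A0 (ncast_index e (NNil A0))) (FShId _)).
- subst D0; exact (rotate_cons X t).
Defined.

Definition rotate_step (x : NShObj) :
  {y : NShObj & FSh (embed (projT2 x)) (embed (projT2 y))} :=
  rotate_step_gen (projT2 x) erefl.

Fixpoint rotation (k : nat) (x : NShObj) :
  {y : NShObj & FSh (embed (projT2 x)) (embed (projT2 y))} :=
  match k with
  | 0 => existT _ x (FShId _)
  | k'.+1 => existT _ (projT1 (rotation k' (projT1 (rotate_step x))))
      (FShComp (projT2 (rotate_step x)) (projT2 (rotation k' (projT1 (rotate_step x)))))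
  end.

Definition rot_obj k x := projT1 (rotation k x).
Definition rot_mor k x : tmor S (evalN x) (evalN (rot_obj k x)) :=
  evalSh S (projT2 (rotation k x)).

Lemma rot_obj_add k j x : rot_obj (k + j) x = rot_obj j (rot_obj k x).
Proof. by elim: k x => [|k IH] x //=; exact: IH. Qed.

Lemma rot_mor_add k j x (E : rot_obj (k + j) x = rot_obj j (rot_obj k x)) :
  rot_mor (k + j) x >>> ntransport E = rot_mor k x >>> rot_mor j (rot_obj k x).
Proof.
elim: k x E => [|k IH] x E.
  change (rot_mor j x >>> ntransport (E : rot_obj j x = rot_obj j x)
          = tid _ >>> rot_mor j x).
  by rewrite ntransport_id tcomp_id_l tcomp_id_r.
set x1 := projT1 (rotate_step x).
change (evalSh S (projT2 (rotate_step x)) >>> rot_mor (k + j) x1 >>> ntransport E =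
  evalSh S (projT2 (rotate_step x)) >>> rot_mor k x1 >>> rot_mor j (rot_obj k x1)).
by rewrite -!tcomp_assoc (IH x1 E).
Qed.

Definition is_rotation k (x z : NShObj) (m : tmor S (evalN x) (evalN z)) : Prop :=
  exists e : rot_obj k x = z, m = rot_mor k x >>> ntransport e.
Arguments is_rotation : clear implicits.

Lemma is_rotation_add k j x y z m1 m2 :
  is_rotation k x y m1 -> is_rotation j y z m2 -> is_rotation (k + j) x z (m1 >>> m2).
Proof.
case=> e1 -> [e2 ->]; subst y z.
by exists (rot_obj_add k j x); rewrite !tcomp_id_r rot_mor_add.
Qed.

Lemma is_rotation_uniq k x z z' m1 m :
  is_rotation k x z m1 -> is_rotation k x z' m -> exists e : z' = z, m1 = m >>> ntransport e.
Proof.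
by case=> e1 -> [e2 ->]; subst z z'; exists erefl; rewrite !ntransport_id !tcomp_id_r.
Qed.

Lemma is_rotation0 x z (e : x = z) : is_rotation 0 x z (ntransport e).
Proof. by exists e; rewrite /= tcomp_id_l. Qed.

Lemma is_rotation0_inv x z m : is_rotation 0 x z m -> exists e : x = z, m = ntransport e.
Proof. by case=> e ->; exists e; rewrite /= tcomp_id_l. Qed.

Lemma is_rotation_transport k x z z' m (e : z = z') :
  is_rotation k x z m -> is_rotation k x z' (m >>> ntransport e).
Proof. by subst; rewrite /= tcomp_id_r. Qed.

Definition fcell_normal A C (w : Word A C) : FCell w (embed (napp w (NNil C))) :=
  FVcomp (FRunitInv w) (normalize w (NNil C)).
Definition nshadow (A : ob B) (w : Word A A) : NShObj := existT _ A (napp w (NNil A)).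
Definition norm_sh (A : ob B) (w : Word A A) : tmor S (sh (evalW w)) (evalN (nshadow w)) :=
  shmap (evalC (fcell_normal w)).
Definition denorm_sh (A : ob B) (w : Word A A) : tmor S (evalN (nshadow w)) (sh (evalW w)) :=
  shmap (evalC (fcell_inv (fcell_normal w))).

Lemma shmap_coherence (A : ob B) (u v : Word A A) (c1 c2 : FCell u v) :
  shmap (evalC c1) = shmap (evalC c2) :> tmor S _ _.
Proof. by rewrite (fcell_coherence c1 c2). Qed.

Lemma denorm_norm (A : ob B) (w : Word A A) : denorm_sh w >>> norm_sh w = tid _.
Proof.
rewrite /denorm_sh /norm_sh -shmap_comp -shmap_id.
exact: (shmap_coherence (FVcomp (fcell_inv (fcell_normal w)) (fcell_normal w)) (FId _)).
Qed.

Definition conj_rotation k (A A' : ob B) (w : Word A A) (w' : Word A' A')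
    (m : tmor S (sh (evalW w)) (sh (evalW w'))) : Prop :=
  exists m', is_rotation k (nshadow w) (nshadow w') m'
             /\ m = norm_sh w >>> m' >>> denorm_sh w'.
Arguments conj_rotation k {A A'} w w' m.

Lemma conj_rotation_cancel (A A' : ob B) (w : Word A A) (w' : Word A' A') a b :
  norm_sh w >>> a >>> denorm_sh w' = norm_sh w >>> b >>> denorm_sh w' -> a = b.
Proof.
move=> H; have := congr1 (fun t => denorm_sh w >>> t >>> norm_sh w') H.
by rewrite /= !tcomp_assoc !denorm_norm !tcomp_id_l -!tcomp_assoc !denorm_norm !tcomp_id_r.
Qed.

Lemma conj_rotation_comp k j (A1 A2 A3 : ob B) (w1 : Word A1 A1) (w2 : Word A2 A2)
    (w3 : Word A3 A3) m1 m2 :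
  conj_rotation k w1 w2 m1 -> conj_rotation j w2 w3 m2 ->
  conj_rotation (k + j) w1 w3 (m1 >>> m2).
Proof.
case=> m1' [H1 ->] [m2' [H2 ->]].
exists (m1' >>> m2'); split; first exact: is_rotation_add H1 H2.
by rewrite !tcomp_assoc -(tcomp_assoc _ (denorm_sh w2)) denorm_norm tcomp_id_r.
Qed.

Definition fcast A C (n m : NWord A C) (e : n = m) : FCell (embed n) (embed m) :=
  match e with erefl => FId _ end.

Lemma ntransport_fcast (A : ob B) (n n' : NWord A A) (E : n = n') :
  ntransport (f_equal (existT (fun A => NWord A A) A) E) = shmap (evalC (fcast E)).
Proof. by subst; rewrite /= shmap_id. Qed.

(* Shadows of formal 2-cells are rotations by 0 (bicategorical coherence). *)
Lemma conj_rotation_cell (A : ob B) (w w' : Word A A) (c : FCell w w') :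
  conj_rotation 0 w w' (shmap (evalC c)).
Proof.
exists (ntransport (f_equal (existT (fun A => NWord A A) A) (napp_fcell c (NNil A)))).
split; first exact: is_rotation0.
rewrite ntransport_fcast /norm_sh /denorm_sh -!shmap_comp; congr shmap.
exact: (fcell_coherence c
  (FVcomp (FVcomp (fcell_normal w) (fcast _)) (fcell_inv (fcell_normal w')))).
Qed.

(* [theta] with a unit on the left is a 2-cell, by the unit axiom. *)
Lemma conj_rotation_theta_unit (A : ob B) (v : Word A A) :
  conj_rotation 0 (WComp (WUnit A) v) (WComp v (WUnit A)) (theta (unit1 A) (evalW v)).
Proof.
have -> : theta (unit1 A) (evalW v)
          = shmap (evalC (FVcomp (FLunit v) (FRunitInv v))) :> tmor S _ _.
  rewrite /= shmap_comp -{1}(tcomp_id_r (theta _ _)).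
  rewrite -(shmap_id S (comp1 (evalW v) (unit1 A))) -(runit_iso1 (evalW v)).
  by rewrite shmap_comp -(theta_unit S (evalW v)) !tcomp_assoc theta_invol tcomp_id_l.
exact: conj_rotation_cell.
Qed.

(* By naturality of [theta], the invariant for [theta u v] only depends on
   [u] and [v] up to formal 2-cells. *)
Lemma conj_rotation_theta_nat k (A C : ob B) (u u' : Word A C) (v v' : Word C A)
    (a : FCell u u') (b : FCell v v') :
  conj_rotation k (WComp u' v') (WComp v' u') (theta (evalW u') (evalW v')) ->
  conj_rotation k (WComp u v) (WComp v u) (theta (evalW u) (evalW v)).
Proof.
move=> H.
set ab := FVcomp (FWhiskR v a) (FWhiskL u' b).
set ba := FVcomp (FWhiskR u b) (FWhiskL v' a).
have Hab : evalC ab = evalC a <o> evalC b by rewrite /= -hcomp_split.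
have Hba : evalC ba = evalC b <o> evalC a by rewrite /= -hcomp_split.
have [Hba_inv _] := evalC_fcell_inv ba.
have E : theta (evalW u) (evalW v)
         = shmap (evalC ab) >>> theta (evalW u') (evalW v') >>> shmap (evalC (fcell_inv ba))
         :> tmor S _ _.
  by rewrite Hab theta_nat -tcomp_assoc -shmap_comp -Hba Hba_inv shmap_id tcomp_id_r.
have := conj_rotation_comp (conj_rotation_comp (conj_rotation_cell ab) H)
                           (conj_rotation_cell (fcell_inv ba)).
by rewrite add0n addn0 -E.
Qed.

Lemma conj_rotation_theta_edge_normal (A C : ob B) (X : @hom B A C) (q : NWord C A) :
  conj_rotation 1 (WComp (WEdge X) (embed q)) (WComp (embed q) (WEdge X))
    (theta X (evalW (embed q))).
Proof.
set q' := napp (embed q) (NNil A).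
have E : napp (embed q') (NCons X (NNil C)) = napp (embed q) (NCons X (NNil C)).
  by rewrite napp_embed.
set EC := f_equal (existT (fun A => NWord A A) C) E.
exists (rot_mor 1 (nshadow (WComp (WEdge X) (embed q))) >>> ntransport EC).
split; first by exists EC.
rewrite ntransport_fcast /rot_mor /= /norm_sh /denorm_sh.
rewrite (shmap_coherence (fcell_normal (WComp (WEdge X) (embed q)))
                         (FWhiskL (WEdge X) (fcell_normal (embed q)))) /=.
rewrite !tcomp_assoc theta_nat tcomp_id_r -!tcomp_assoc -!shmap_comp.
rewrite -{1}(tcomp_id_r (theta _ _)); congr tcomp.
rewrite -shmap_id; congr shmap; symmetry.
exact: (fcell_coherence (FVcomp (FWhiskR (WEdge X) (fcell_normal (embed q)))
  (FVcomp (FVcomp (FWhiskL (embed q') (FRunitInv (WEdge X)))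
                  (normalize (embed q') (NCons X (NNil C))))
          (FVcomp (fcast E) (fcell_inv (fcell_normal (WComp (embed q) (WEdge X)))))))
  (FId _)).
Qed.

Lemma conj_rotation_theta_edge (A C : ob B) (X : @hom B A C) (v : Word C A) :
  conj_rotation 1 (WComp (WEdge X) v) (WComp v (WEdge X)) (theta X (evalW v)).
Proof.
exact: (conj_rotation_theta_nat (FId (WEdge X)) (fcell_normal v)
          (conj_rotation_theta_edge_normal X (napp v (NNil A)))).
Qed.

(* The hexagon axiom splits [theta (X ⊙ p) v] into [theta X _] followed by
   [theta p _], up to associators. *)
Lemma theta_cons_split (A C D : ob B) (X : @hom B A C) (p : @hom B C D) (v : @hom B D A) :
  theta (comp1 X p) v =
    shmap (assoc X p v) >>> theta X (comp1 p v) >>> shmap (assoc p v X)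
    >>> theta p (comp1 v X) >>> shmap (assoc v X p) :> tmor S _ _.
Proof.
have Hx := theta_hex S X p v; rewrite !tcomp_assoc in Hx.
rewrite -Hx -(tcomp_assoc _ (theta _ _) (theta _ _)) theta_invol tcomp_id_r.
by rewrite -tcomp_assoc -shmap_comp assoc_iso2 shmap_id tcomp_id_r.
Qed.

Lemma conj_rotation_theta_normal (A C : ob B) (p : NWord A C) (v : Word C A) :
  conj_rotation (size (letters (embed p))) (WComp (embed p) v) (WComp v (embed p))
    (theta (evalW (embed p)) (evalW v)).
Proof.
elim: p v => [A0 | A0 C0 D0 X p IH] v; first exact: conj_rotation_theta_unit.
have G := conj_rotation_comp (conj_rotation_comp (conj_rotation_comp (conj_rotation_comp
   (conj_rotation_cell (FAssoc (WEdge X) (embed p) v))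
   (conj_rotation_theta_edge X (WComp (embed p) v)))
   (conj_rotation_cell (FAssoc (embed p) v (WEdge X))))
   (IH (WComp v (WEdge X))))
   (conj_rotation_cell (FAssoc v (WEdge X) (embed p))).
by rewrite !addn0 add0n add1n in G; rewrite /= theta_cons_split.
Qed.

Lemma conj_rotation_theta (A C : ob B) (u : Word A C) (v : Word C A) :
  conj_rotation (size (letters u)) (WComp u v) (WComp v u) (theta (evalW u) (evalW v)).
Proof.
have := conj_rotation_theta_normal (napp u (NNil C)) v.
rewrite letters_napp /= cats0 => H.
exact: (conj_rotation_theta_nat (fcell_normal u) (FId v) H).
Qed.

Lemma evalSh_conj_rotation (A A' : ob B) (w : Word A A) (w' : Word A' A') (f : FSh w w') :
  conj_rotation (shift f) w w' (evalSh S f).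
Proof.
elim: f => /=.
- by move=> A0 w0; have := conj_rotation_cell (FId w0); rewrite /= shmap_id.
- by move=> A1 A2 A3 w1 w2 w3 g IHg h IHh; exact: conj_rotation_comp IHg IHh.
- by move=> A0 w0 w0' c; exact: conj_rotation_cell.
- by move=> A0 C0 u v; exact: conj_rotation_theta.
Qed.

Definition nlen (y : NShObj) := size (letters (embed (projT2 y))).

Lemma nlen_rotate_step_gen A D (n : NWord A D) (e : D = A) :
  nlen (projT1 (rotate_step_gen n e)) = size (letters (embed n)).
Proof.
case: n e => [A0|A0 C0 D0 X t] e.
- by rewrite (proof_irrelevance _ e erefl).
- by subst D0; rewrite /nlen /= letters_napp /= size_cat /= addn1.
Qed.

Lemma nlen_rot_obj k x : nlen (rot_obj k x) = nlen x.
Proof.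
elim: k x => [|k IH] x //.
change (nlen (rot_obj k (projT1 (rotate_step x))) = nlen x).
by rewrite IH /rotate_step nlen_rotate_step_gen.
Qed.

(* The rotation by the full length is the identity: [theta w I] is both
   the rotation by [nlen] (by the invariant) and a 2-cell (unit axiom). *)
Lemma full_rotation (y : NShObj) : is_rotation (nlen y) y y (tid _).
Proof.
case: y => A n.
have G1 := conj_rotation_theta (embed n) (WUnit A).
have G0 : conj_rotation 0 (WComp (embed n) (WUnit A)) (WComp (WUnit A) (embed n))
            (theta (evalW (embed n)) (unit1 A)).
  have -> : theta (evalW (embed n)) (unit1 A) =
      shmap (evalC (FVcomp (FRunit (embed n)) (FLunitInv (embed n)))) :> tmor S _ _.
    rewrite /= shmap_comp -(theta_unit S) -tcomp_assoc -shmap_comp.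
    by rewrite lunit_iso1 shmap_id tcomp_id_r.
  exact: conj_rotation_cell.
case: G1 => m1 [R1 E1]; case: G0 => m0 [R0 E0].
have Hm : m1 = m0 by apply: conj_rotation_cancel; rewrite -E1 -E0.
case: (is_rotation0_inv R0) => e He; subst m1 m0.
have := is_rotation_transport (esym e) R1.
rewrite (ntransport_comp _ _ erefl) /=.
have -> : nshadow (WComp (embed n) (WUnit A)) = existT _ A n.
  exact: (f_equal (existT (fun A => NWord A A) A) (napp_embed_nil n)).
done.
Qed.

Lemma full_rotation_mult (y : NShObj) q : is_rotation (q * nlen y) y y (tid _).
Proof.
elim: q => [|q IH]; first exact: (is_rotation0 erefl).
by rewrite mulSn; have := is_rotation_add (full_rotation y) IH; rewrite tcomp_id_l.
Qed.

Lemma rotation_mod k j x z m1 m2 :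
  is_rotation k x z m1 -> is_rotation j x z m2 -> k = j %[mod nlen x] -> m1 = m2.
Proof.
move=> H1 H2 Hkj; set r := k %% nlen x.
have Hr : is_rotation r x (rot_obj r x) (rot_mor r x).
  by exists erefl; rewrite /= tcomp_id_r.
have Hp q : is_rotation (r + q * nlen x) x (rot_obj r x) (rot_mor r x).
  have := is_rotation_add Hr (full_rotation_mult (rot_obj r x) q).
  by rewrite nlen_rot_obj tcomp_id_r.
have Hk := Hp (k %/ nlen x); rewrite addnC -divn_eq in Hk.
have Hj := Hp (j %/ nlen x).
have Ej : r + j %/ nlen x * nlen x = j by rewrite /r Hkj addnC -divn_eq.
rewrite Ej in Hj.
case: (is_rotation_uniq H1 Hk) => e1 ->; case: (is_rotation_uniq H2 Hj) => e2 ->.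
by rewrite (proof_irrelevance _ e1 e2).
Qed.

Theorem same_cyc_perm_commutes (D : Diagram B) : same_cyc_perm D -> image_commutes S D.
Proof.
move=> Hperm [A w] [A' w'] f g Cf Cg.
case: (evalSh_conj_rotation f) => m1 [R1 ->]; case: (evalSh_conj_rotation g) => m2 [R2 ->].
congr (_ >>> _ >>> _); apply: (rotation_mod R1 R2).
by rewrite /nlen /= letters_napp cats0; exact: Hperm Cf Cg.
Qed.

End Shadows.
End Coherence.

Lemma iter_rot1_cat (T : Type) (s1 s2 : seq T) :
  iter (size s1) (rot 1) (s1 ++ s2) = s2 ++ s1.
Proof.
elim: s1 s2 => [|x s1 IH] s2 /=; first by rewrite cats0.
by rewrite -iterS iterSr rot1_cons rcons_cat IH cat_rcons.
Qed.

Lemma iter_rot1_small (T : Type) (l : seq T) k : k <= size l -> iter k (rot 1) l = rot k l.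
Proof.
elim: k => [|k IH] Hk /=; first by rewrite rot0.
by rewrite IH ?(ltnW Hk) // -rotS.
Qed.

Lemma iter_rot1_mod (T : Type) (l : seq T) k : iter k (rot 1) l = rot (k %% size l) l.
Proof.
case: (posnP (size l)) => [/size0nil -> | Hl]; first by elim: k => //= k ->.
have Hfull q : iter (q * size l) (rot 1) l = l.
  by elim: q => [|q IH] //=; rewrite mulSn iterD IH iter_rot1_small // rot_size.
rewrite {1}(divn_eq k (size l)) addnC iterD Hfull iter_rot1_small //.
exact: ltnW (ltn_pmod _ Hl).
Qed.

Lemma aperiodic_rot_inj (T : Type) (Xs : seq T) a b : aperiodic Xs ->
  a < size Xs -> b < size Xs -> rot a Xs = rot b Xs -> a = b.
Proof.
move=> Hap.
wlog Hab : a b / a <= b.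
  move=> W Ha Hb E; case: (leqP a b) => H; first exact: W.
  by symmetry; apply: W => //; exact: ltnW.
move=> Ha Hb E; case: (ltngtP a b) => // Hlt; last by move: Hab; rewrite leqNgt Hlt.
have E2 : rot b Xs = rot (b - a) (rot a Xs) by rewrite -rotD subnK // ltnW.
rewrite E2 rot_rot in E; have E3 := rot_inj E.
case: (Hap (b - a)); last by rewrite -E3.
by rewrite subn_gt0 Hlt /= (leq_ltn_trans (leq_subr a b) Hb).
Qed.

Section Letters.
Variable B : Bicat.

Lemma letters_fcell (A C : ob B) (u v : Word A C) (c : FCell u v) : letters u = letters v.
Proof. by elim: c => //= *; try congruence; rewrite ?catA ?cats0. Qed.

Lemma letters_fsh (A A' : ob B) (w : Word A A) (w' : Word A' A') (f : FSh w w') :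
  letters w' = iter (shift f) (rot 1) (letters w).
Proof.
elim: f => //=.
- by move=> A1 A2 A3 w1 w2 w3 g IHg h IHh; rewrite IHh IHg addnC iterD.
- by move=> A0 w0 w0' c; rewrite (letters_fcell c).
- by move=> A0 C0 u v; rewrite iter_rot1_cat.
Qed.

Lemma shift_no_letters (A A' : ob B) (w : Word A A) (w' : Word A' A') (f : FSh w w') :
  letters w = [::] -> shift f = 0.
Proof.
elim: f => //=.
- move=> A1 A2 A3 w1 w2 w3 g IHg h IHh H.
  rewrite IHg // IHh // (letters_fsh g) H iter_rot1_mod.
  by rewrite /rot drop_oversize ?take_oversize.
- by move=> A0 C0 u v; case: (letters u).
Qed.

Lemma aperiodic_same_shift (Xs : seq (Edge B)) (x y : ShObj B) (f g : FShO x y) k :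
  aperiodic Xs -> letters (projT2 x) = rot k Xs ->
  shift f = shift g %[mod size (letters (projT2 x))].
Proof.
case: x f g => A w f g Hap /= Hk.
case: (posnP (size (letters w))) => [/size0nil H0 | Hpos].
  by rewrite (shift_no_letters f H0) (shift_no_letters g H0).
have Ef := letters_fsh f; have Eg := letters_fsh g.
rewrite /= !iter_rot1_mod in Ef Eg; rewrite Ef Hk !(rot_rot _ k) in Eg.
have Hs : size (letters w) = size Xs by rewrite Hk size_rot.
move: (rot_inj Eg); rewrite size_rot Hs => E.
have Hpos' : 0 < size Xs by rewrite -Hs.
by apply: (aperiodic_rot_inj Hap); rewrite ?ltn_pmod.
Qed.

Lemma composite_source_on (Xs : seq (Edge B)) (D : Diagram B) :
  diagram_on Xs D -> forall x y (f : FShO x y), Composite D x y f ->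
  shift f = 0 \/ exists k, letters (projT2 x) = rot k Xs.
Proof.
move=> Hon x y f; case=> [x0 | x0 y0 z0 f0 g0 Hin _]; first by left.
by right; exact: (proj1 (Hon _ Hin)).
Qed.

Lemma aperiodic_same_cyc_perm (Xs : seq (Edge B)) (D : Diagram B) :
  aperiodic Xs -> diagram_on Xs D -> same_cyc_perm D.
Proof.
move=> Hap Hon x y f g Cf Cg.
case: (composite_source_on Hon Cf) => [Hf | [k Hk]]; last exact: aperiodic_same_shift Hap Hk.
case: (composite_source_on Hon Cg) => [Hg | [k Hk]]; first by rewrite Hf Hg.
by symmetry; exact: aperiodic_same_shift Hap Hk.
Qed.

End Letters.

Theorem mainTheorem4 (B : Bicat) (S : Shadow B) :
  (forall D : Diagram B, same_cyc_perm D -> image_commutes S D) /\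
  (forall Xs : seq (Edge B), aperiodic Xs ->
     forall D : Diagram B, diagram_on Xs D -> image_commutes S D).
Proof.
split; first exact: same_cyc_perm_commutes.
move=> Xs Hap D Hon; apply: same_cyc_perm_commutes.
exact: aperiodic_same_cyc_perm Hap Hon.
Qed.
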